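(* Let $(F,F_0,\tilde F,\tilde\phi)$ and $(F',F'_0,\tilde F',\tilde\phi')$ be liftings to relative right modules from $(X,I,S)$ to $(Y,J,T)$ in a 2-category $\mathcal{K}$, with corresponding relative monad morphisms $(F,F_0,\phi)$ and $(F',F'_0,\phi')$ ($\phi$, $\phi'$ being the components at $1_Y$ of $J^*_{X_0}\tilde\phi$, $J^*_{X_0}\tilde\phi'$). Then maps of liftings to relative right modules $(p,p_0,\tilde p)\colon(F,F_0,\tilde F,\tilde\phi)\Rightarrow(F',F'_0,\tilde F',\tilde\phi')$ are in bijection with relative monad transformations $(p,p_0)\colon(F,F_0,\phi)\Rightarrow(F',F'_0,\phi')$, via $(p,p_0,\tilde p)\mapsto(p,p_0)$; the inverse sets the component of $\tilde p$ at $(M,(-)_m)$ to $Mp_0\colon MF_0\Rightarrow MF'_0$.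
   Context: Conventions: 1-cells compose by juxtaposition; vertical composition of 2-cells is written $\cdot$; whiskering by juxtaposition. Relative monad: a relative monad $(X,I,S)$ in $\mathcal{K}$ consists of objects $X_0,X$, 1-cells $I,S\colon X_0\to X$, an operator $(-)^\dagger=(-)^\dagger_S\colon[I,S]\to[S,S]$ (extension: for every span $A,B\colon O\to X_0$ a function sending 2-cells $IA\Rightarrow SB$ to 2-cells $SA\Rightarrow SB$, natural in $O$, $A$ and $B$) and a 2-cell $s\colon I\Rightarrow S$ (unit) such that $k^\dagger\cdot sA=k$, $(sA)^\dagger=1_{SA}$, $(l^\dagger\cdot k)^\dagger=l^\dagger\cdot k^\dagger$ for all $k\colon IA\Rightarrow SB$, $l\colon IB\Rightarrow SC$. Relative monad morphisms and transformations: a relative monad morphism $(F,F_0,\phi)\colon(X,I,S)\to(Y,J,T)$ (with $I\colon X_0\to X$, $J\colon Y_0\to Y$, units $s,t$) consists of 1-cells $F\colon X\to Y$, $F_0\colon X_0\to Y_0$ with $FI=JF_0$ and a 2-cell $\phi\colon FS\Rightarrow TF_0$ such that $\phi\cdot Fs=tF_0$ and, for all $A,B\colon O\to X_0$ and $k\colon IA\Rightarrow SB$, $\phi B\cdot F(k^\dagger_S)=(\phi B\cdot Fk)^\dagger_T\cdot\phi A$. A relative monad transformation $(p,p_0)\colon(F,F_0,\phi)\Rightarrow(F',F'_0,\phi')$ consists of 2-cells $p\colon F\Rightarrow F'$, $p_0\colon F_0\Rightarrow F'_0$ with $Jp_0=pI$ and $\phi'\cdot pS=Tp_0\cdot\phi$.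 Relative right modules: for a relative monad $(X,I,T)$ (unit $t$, extension $(-)^\dagger$) and object $K$, a $K$-indexed relative right $T$-module is a 1-cell $M\colon X_0\to K$ with an operator $(-)_m\colon[I,T]\to[M,M]$ (so $h\colon IA\Rightarrow TB$ gives $h_m\colon MA\Rightarrow MB$, naturally in $O,A,B$) such that $(tA)_m=1_{MA}$ and $(k^\dagger\cdot h)_m=k_m\cdot h_m$ for all $h\colon IA\Rightarrow TB$, $k\colon IB\Rightarrow TC$. A morphism $(M,(-)_m)\to(N,(-)_n)$ is a 2-cell $g\colon M\Rightarrow N$ with $gB\cdot h_m=h_n\cdot gA$. These form a category $\mathrm{Mod}_T(K)$ and a 2-functor $\mathrm{Mod}_T(-)\colon\mathcal{K}\to\mathbf{Cat}$ acting by postcomposition. $J^*_{X_0}\colon\mathrm{Mod}_T(-)\to\mathcal{K}(X_0,-)$ is the forgetful 2-natural transformation; $U^*_X\colon\mathcal{K}(X,-)\to\mathrm{Mod}_T(-)$ sends $M\colon X\to K$ to $(MT,M(-)^\dagger)$; the modification $t\colon(-\circ I)\Rightarrow J^*_{X_0}U^*_X$ has components $Mt\colon MI\Rightarrow MT$. The same notation is used for any relative monad. Lifting to relative right modules: for relative monads $(X,I,S)$ ($I\colon X_0\to X$, unit $s$) and $(Y,J,T)$ ($J\colon Y_0\to Y$, unit $t$), a lifting to relative right modules from $(X,I,S)$ to $(Y,J,T)$ is a tuple $(F,F_0,\tilde F,\tilde\phi)$: 1-cells $F\colon X\to Y$, $F_0\colon X_0\to Y_0$ with $FI=JF_0$;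 a 2-natural transformation $\tilde F\colon\mathrm{Mod}_T(-)\to\mathrm{Mod}_S(-)$ with $J^*_{X_0}\tilde F=(-\circ F_0)J^*_{Y_0}$, so that $\tilde F(M,(-)_m)=(MF_0,(-)_{\tilde Fm})$; and a modification $\tilde\phi\colon U^*_X\circ(-\circ F)\Rightarrow\tilde F\circ U^*_Y$ between 2-natural transformations $\mathcal{K}(Y,-)\to\mathrm{Mod}_S(-)$; such that (1) for every $M\colon Y\to K$, $(J^*_{X_0}\tilde\phi)_M\cdot MFs=MtF_0$ as 2-cells $MJF_0=MFI\Rightarrow MTF_0$; (2) for every $(M,(-)_m)\in\mathrm{Mod}_T(K)$, all $A,B\colon O\to X_0$ and $f\colon IA\Rightarrow SB$, $f_{\tilde Fm}=(f_{\tilde FT}\cdot tF_0A)_m$, where $(-)_{\tilde FT}$ is the operator of $\tilde F(T,(-)^\dagger_T)$. Map of liftings: $(p,p_0,\tilde p)\colon(F,F_0,\tilde F,\tilde\phi)\Rightarrow(F',F'_0,\tilde F',\tilde\phi')$ consists of 2-cells $p\colon F\Rightarrow F'$, $p_0\colon F_0\Rightarrow F'_0$ with $Jp_0=pI$, and a modification $\tilde p\colon\tilde F\Rightarrow\tilde F'$ with $J^*_{X_0}\tilde p=(-\circ p_0)J^*_{Y_0}$ and $\tilde\phi'\cdot U^*_X(-\circ p)=\tilde pU^*_Y\cdot\tilde\phi$. *)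

(* Strict 2-categories.  1-cells compose as  g \o1 f  (f first);       *)
(* vertical composition  b \v a  (a first); whiskering whL / whR.      *)
(* The 1-cell laws are Leibniz equalities (strictness).                *)
Record PreTwoCat := {
  ob : Type;
  hom : ob -> ob -> Type;
  cell : forall A B : ob, hom A B -> hom A B -> Type;
  id1 : forall A : ob, hom A A;
  comp1 : forall A B C : ob, hom B C -> hom A B -> hom A C;
  id2 : forall A B (f : hom A B), cell A B f f;
  vcomp : forall A B (f g h : hom A B), cell A B g h -> cell A B f g -> cell A B f h;
  whL : forall A B C (h : hom B C) (f g : hom A B),
      cell A B f g -> cell A C (comp1 A B C h f) (comp1 A B C h g);
  whR : forall A B C (f g : hom B C), cell B C f g ->
      forall k : hom A B, cell A C (comp1 A B C f k) (comp1 A B C g k);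
  comp1A : forall A B C D (h : hom C D) (g : hom B C) (f : hom A B),
      comp1 A B D (comp1 B C D h g) f = comp1 A C D h (comp1 A B C g f);
  comp1_idl : forall A B (f : hom A B), comp1 A B B (id1 B) f = f;
  comp1_idr : forall A B (f : hom A B), comp1 A A B f (id1 A) = f }.

Arguments hom {_} _ _.
Arguments cell {_ A B} _ _.
Arguments id1 {_} _.
Arguments comp1 {_ A B C} _ _.
Arguments id2 {_ A B} _.
Arguments vcomp {_ A B f g h} _ _.
Arguments whL {_ A B C} h {f g} _.
Arguments whR {_ A B C f g} _ k.
Arguments comp1A {_ A B C D} h g f.
Arguments comp1_idl {_ A B} f.
Arguments comp1_idr {_ A B} f.

Notation "g \o1 f" := (comp1 g f) (at level 40, left associativity).
Notation "b \v a" := (vcomp b a) (at level 50, left associativity).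

Definition eqc {C : PreTwoCat} {A B : ob C} {f g : hom A B} (e : f = g) : cell f g :=
  match e in _ = y return cell f y with eq_refl => id2 f end.

Record is_two_cat (C : PreTwoCat) : Prop := {
  vA : forall (A B : ob C) (f g h k : hom A B) (c : cell h k) (b : cell g h) (a : cell f g),
      (c \v b) \v a = c \v (b \v a);
  vidl : forall (A B : ob C) (f g : hom A B) (a : cell f g), id2 g \v a = a;
  vidr : forall (A B : ob C) (f g : hom A B) (a : cell f g), a \v id2 f = a;
  whL_id : forall (A B D : ob C) (h : hom B D) (f : hom A B), whL h (id2 f) = id2 (h \o1 f);
  whL_v : forall (A B D : ob C) (h : hom B D) (f g k : hom A B) (b : cell g k) (a : cell f g),
      whL h (b \v a) = whL h b \v whL h a;
  whR_id : forall (A B D : ob C) (f : hom B D) (k : hom A B), whR (id2 f) k = id2 (f \o1 k);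
  whR_v : forall (A B D : ob C) (f g h : hom B D) (b : cell g h) (a : cell f g) (k : hom A B),
      whR (b \v a) k = whR b k \v whR a k;
  whL_id1 : forall (A B : ob C) (f g : hom A B) (a : cell f g),
      eqc (comp1_idl g) \v whL (id1 B) a = a \v eqc (comp1_idl f);
  whL_comp : forall (A B D E : ob C) (h : hom D E) (h' : hom B D) (f g : hom A B) (a : cell f g),
      eqc (comp1A h h' g) \v whL (h \o1 h') a = whL h (whL h' a) \v eqc (comp1A h h' f);
  whR_id1 : forall (A B : ob C) (f g : hom A B) (a : cell f g),
      eqc (comp1_idr g) \v whR a (id1 A) = a \v eqc (comp1_idr f);
  whR_comp : forall (A B D E : ob C) (f g : hom D E) (a : cell f g) (k : hom B D) (k' : hom A B),
      eqc (comp1A g k k') \v whR (whR a k) k' = whR a (k \o1 k') \v eqc (comp1A f k k');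
  whLR : forall (A B D E : ob C) (h : hom D E) (f g : hom B D) (a : cell f g) (k : hom A B),
      eqc (comp1A h g k) \v whR (whL h a) k = whL h (whR a k) \v eqc (comp1A h f k);
  interchange : forall (A B D : ob C) (f f' : hom A B) (g g' : hom B D)
      (a : cell f f') (b : cell g g'),
      whR b f' \v whL g a = whL g' a \v whR b f }.

Record RelMonad {C : PreTwoCat} (X0 X : ob C) (I : hom X0 X) := {
  rmS : hom X0 X;
  rmext : forall (O : ob C) (A B : hom O X0),
      cell (I \o1 A) (rmS \o1 B) -> cell (rmS \o1 A) (rmS \o1 B);
  rmunit : cell I rmS }.

Arguments rmS {C X0 X I} _.
Arguments rmext {C X0 X I} _ {O A B} _.
Arguments rmunit {C X0 X I} _.

Record is_rel_monad {C : PreTwoCat} (X0 X : ob C) (I : hom X0 X) (S : RelMonad X0 X I) : Prop := {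
  rm_natO : forall (O O' : ob C) (Z : hom O' O) (A B : hom O X0)
      (k : cell (I \o1 A) (rmS S \o1 B)),
      rmext S (eqc (comp1A (rmS S) B Z) \v whR k Z \v eqc (eq_sym (comp1A I A Z)))
      = eqc (comp1A (rmS S) B Z) \v whR (rmext S k) Z \v eqc (eq_sym (comp1A (rmS S) A Z));
  rm_natA : forall (O : ob C) (A A' B : hom O X0) (a : cell A' A)
      (k : cell (I \o1 A) (rmS S \o1 B)),
      rmext S (k \v whL I a) = rmext S k \v whL (rmS S) a;
  rm_natB : forall (O : ob C) (A B B' : hom O X0) (b : cell B B')
      (k : cell (I \o1 A) (rmS S \o1 B)),
      rmext S (whL (rmS S) b \v k) = whL (rmS S) b \v rmext S k;
  rm_unitl : forall (O : ob C) (A B : hom O X0) (k : cell (I \o1 A) (rmS S \o1 B)),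
      rmext S k \v whR (rmunit S) A = k;
  rm_unitr : forall (O : ob C) (A : hom O X0),
      rmext S (whR (rmunit S) A) = id2 (rmS S \o1 A);
  rm_assoc : forall (O : ob C) (A B D : hom O X0)
      (k : cell (I \o1 A) (rmS S \o1 B)) (l : cell (I \o1 B) (rmS S \o1 D)),
      rmext S (rmext S l \v k) = rmext S l \v rmext S k }.

Arguments is_rel_monad {C X0 X I} S.

Record RMod {C : PreTwoCat} (X0 X : ob C) (I T : hom X0 X) (K : ob C) := {
  mdM : hom X0 K;
  mdop : forall (O : ob C) (A B : hom O X0),
      cell (I \o1 A) (T \o1 B) -> cell (mdM \o1 A) (mdM \o1 B) }.

Arguments mdM {C X0 X I T K} _.
Arguments mdop {C X0 X I T K} _ {O A B} _.

Record is_module {C : PreTwoCat} (X0 X : ob C) (I : hom X0 X) (T : RelMonad X0 X I)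
    (K : ob C) (N : RMod X0 X I (rmS T) K) : Prop := {
  md_natO : forall (O O' : ob C) (Z : hom O' O) (A B : hom O X0)
      (h : cell (I \o1 A) (rmS T \o1 B)),
      mdop N (eqc (comp1A (rmS T) B Z) \v whR h Z \v eqc (eq_sym (comp1A I A Z)))
      = eqc (comp1A (mdM N) B Z) \v whR (mdop N h) Z \v eqc (eq_sym (comp1A (mdM N) A Z));
  md_natA : forall (O : ob C) (A A' B : hom O X0) (a : cell A' A)
      (h : cell (I \o1 A) (rmS T \o1 B)),
      mdop N (h \v whL I a) = mdop N h \v whL (mdM N) a;
  md_natB : forall (O : ob C) (A B B' : hom O X0) (b : cell B B')
      (h : cell (I \o1 A) (rmS T \o1 B)),
      mdop N (whL (rmS T) b \v h) = whL (mdM N) b \v mdop N h;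
  md_unit : forall (O : ob C) (A : hom O X0),
      mdop N (whR (rmunit T) A) = id2 (mdM N \o1 A);
  md_comp : forall (O : ob C) (A B D : hom O X0)
      (h : cell (I \o1 A) (rmS T \o1 B)) (k : cell (I \o1 B) (rmS T \o1 D)),
      mdop N (rmext T k \v h) = mdop N k \v mdop N h }.

Arguments is_module {C X0 X I} T {K} N.

Definition is_mod_hom {C : PreTwoCat} {X0 X : ob C} {I T : hom X0 X} {K : ob C}
    (N N' : RMod X0 X I T K) (g : cell (mdM N) (mdM N')) : Prop :=
  forall (O : ob C) (A B : hom O X0) (h : cell (I \o1 A) (T \o1 B)),
    whR g B \v mdop N h = mdop N' h \v whR g A.

(* action of Mod_T(-) on a 1-cell H : K -> K' (postcomposition) *)
Definition post {C : PreTwoCat} {X0 X : ob C} {I T : hom X0 X} {K K' : ob C}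
    (H : hom K K') (N : RMod X0 X I T K) : RMod X0 X I T K' :=
  {| mdM := H \o1 mdM N;
     mdop := fun O A B h =>
       eqc (eq_sym (comp1A H (mdM N) B)) \v whL H (mdop N h) \v eqc (comp1A H (mdM N) A) |}.

Definition Ustar {C : PreTwoCat} {X0 X : ob C} {I : hom X0 X} (S : RelMonad X0 X I)
    {K : ob C} (M : hom X K) : RMod X0 X I (rmS S) K :=
  {| mdM := M \o1 rmS S;
     mdop := fun O A B h =>
       eqc (eq_sym (comp1A M (rmS S) B)) \v whL M (rmext S h) \v eqc (comp1A M (rmS S) A) |}.

Definition Tmod {C : PreTwoCat} {Y0 Y : ob C} {J : hom Y0 Y} (T : RelMonad Y0 Y J)
    : RMod Y0 Y J (rmS T) Y :=
  {| mdM := rmS T; mdop := fun O A B h => rmext T h |}.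

(* The 2-natural transformation Ftilde is given, as J^*Ftilde =        *)
(* (- o F0) J^* forces, by its operators: Ftilde(M,m) = (M F0, lFt N). *)
(* The modification phitilde is given by its components                *)
(* lphi M : (M F) S => (M T) F0.                                       *)
Record Lifting {C : PreTwoCat} (X0 X Y0 Y : ob C) (I : hom X0 X) (J : hom Y0 Y)
    (S : RelMonad X0 X I) (T : RelMonad Y0 Y J) := {
  lF : hom X Y;
  lF0 : hom X0 Y0;
  lFI : lF \o1 I = J \o1 lF0;
  lFt : forall (K : ob C) (N : RMod Y0 Y J (rmS T) K) (O : ob C) (A B : hom O X0),
      cell (I \o1 A) (rmS S \o1 B) -> cell ((mdM N \o1 lF0) \o1 A) ((mdM N \o1 lF0) \o1 B);
  lphi : forall (K : ob C) (M : hom Y K), cell ((M \o1 lF) \o1 rmS S) ((M \o1 rmS T) \o1 lF0) }.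

Arguments lF {C X0 X Y0 Y I J S T} _.
Arguments lF0 {C X0 X Y0 Y I J S T} _.
Arguments lFI {C X0 X Y0 Y I J S T} _.
Arguments lFt {C X0 X Y0 Y I J S T} _ {K} N {O A B} _.
Arguments lphi {C X0 X Y0 Y I J S T} _ {K} M.

Section LiftingDefs.
Context {C : PreTwoCat} {X0 X Y0 Y : ob C} {I : hom X0 X} {J : hom Y0 Y}
  {S : RelMonad X0 X I} {T : RelMonad Y0 Y J}.

Definition liftobj (L : Lifting X0 X Y0 Y I J S T) {K : ob C} (N : RMod Y0 Y J (rmS T) K)
    : RMod X0 X I (rmS S) K :=
  {| mdM := mdM N \o1 lF0 L; mdop := fun O A B f => lFt L N f |}.

Definition eq_src (L : Lifting X0 X Y0 Y I J S T) {K K' : ob C} (H : hom K K') (M : hom Y K)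
    : ((H \o1 M) \o1 lF L) \o1 rmS S = H \o1 ((M \o1 lF L) \o1 rmS S) :=
  eq_trans (comp1A (H \o1 M) (lF L) (rmS S))
    (eq_trans (comp1A H M (lF L \o1 rmS S))
       (eq_sym (f_equal (fun x => H \o1 x) (comp1A M (lF L) (rmS S))))).

Definition eq_tgt (L : Lifting X0 X Y0 Y I J S T) {K K' : ob C} (H : hom K K') (M : hom Y K)
    : ((H \o1 M) \o1 rmS T) \o1 lF0 L = H \o1 ((M \o1 rmS T) \o1 lF0 L) :=
  eq_trans (comp1A (H \o1 M) (rmS T) (lF0 L))
    (eq_trans (comp1A H M (rmS T \o1 lF0 L))
       (eq_sym (f_equal (fun x => H \o1 x) (comp1A M (rmS T) (lF0 L))))).

Definition eq_MFI (L : Lifting X0 X Y0 Y I J S T) {K : ob C} (M : hom Y K)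
    : (M \o1 lF L) \o1 I = (M \o1 J) \o1 lF0 L :=
  eq_trans (comp1A M (lF L) I)
    (eq_trans (f_equal (fun x => M \o1 x) (lFI L)) (eq_sym (comp1A M J (lF0 L)))).

Record is_lifting (L : Lifting X0 X Y0 Y I J S T) : Prop := {
  lf_mod : forall (K : ob C) (N : RMod Y0 Y J (rmS T) K),
      is_module T N -> is_module S (liftobj L N);
  lf_hom : forall (K : ob C) (N N' : RMod Y0 Y J (rmS T) K) (g : cell (mdM N) (mdM N')),
      is_module T N -> is_module T N' -> is_mod_hom N N' g ->
      is_mod_hom (liftobj L N) (liftobj L N') (whR g (lF0 L));
  lf_nat1 : forall (K K' : ob C) (H : hom K K') (N : RMod Y0 Y J (rmS T) K),
      is_module T N ->
      forall (O : ob C) (A B : hom O X0) (f : cell (I \o1 A) (rmS S \o1 B)),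
      whR (eqc (comp1A H (mdM N) (lF0 L))) B \v mdop (liftobj L (post H N)) f
      = mdop (post H (liftobj L N)) f \v whR (eqc (comp1A H (mdM N) (lF0 L))) A;
  lf_nat2 : forall (K K' : ob C) (H H' : hom K K') (th : cell H H')
      (N : RMod Y0 Y J (rmS T) K), is_module T N ->
      eqc (comp1A H' (mdM N) (lF0 L)) \v whR (whR th (mdM N)) (lF0 L)
      = whR th (mdM N \o1 lF0 L) \v eqc (comp1A H (mdM N) (lF0 L));
  lf_phihom : forall (K : ob C) (M : hom Y K),
      is_mod_hom (Ustar S (M \o1 lF L)) (liftobj L (Ustar T M)) (lphi L M);
  lf_phinat : forall (K : ob C) (M M' : hom Y K) (th : cell M M'),
      lphi L M' \v whR (whR th (lF L)) (rmS S) = whR (whR th (rmS T)) (lF0 L) \v lphi L M;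
  lf_phimod : forall (K K' : ob C) (H : hom K K') (M : hom Y K),
      eqc (eq_tgt L H M) \v lphi L (H \o1 M) = whL H (lphi L M) \v eqc (eq_src L H M);
  lf_unit : forall (K : ob C) (M : hom Y K),
      lphi L M \v whL (M \o1 lF L) (rmunit S)
      = whR (whL M (rmunit T)) (lF0 L) \v eqc (eq_MFI L M);
  lf_ext : forall (K : ob C) (N : RMod Y0 Y J (rmS T) K), is_module T N ->
      forall (O : ob C) (A B : hom O X0) (f : cell (I \o1 A) (rmS S \o1 B)),
      eqc (comp1A (mdM N) (lF0 L) B) \v lFt L N f
      = mdop N (eqc (comp1A (rmS T) (lF0 L) B)
                 \v (lFt L (Tmod T) f \v whR (whR (rmunit T) (lF0 L)) A)
                 \v eqc (eq_sym (comp1A J (lF0 L) A)))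
        \v eqc (comp1A (mdM N) (lF0 L) A) }.

(* the relative monad morphism (F, F0, phi) of a lifting:
   phi = component at 1_Y of J^* phitilde, a 2-cell (1 F) S => (1 T) F0 = F S => T F0 *)
Definition lphi0 (L : Lifting X0 X Y0 Y I J S T) : cell (lF L \o1 rmS S) (rmS T \o1 lF0 L) :=
  eqc (f_equal (fun x => x \o1 lF0 L) (comp1_idl (rmS T)))
  \v lphi L (id1 Y)
  \v eqc (f_equal (fun x => x \o1 rmS S) (eq_sym (comp1_idl (lF L)))).

Definition is_rel_monad_trans (F F' : hom X Y) (F0 F0' : hom X0 Y0)
    (e : F \o1 I = J \o1 F0) (e' : F' \o1 I = J \o1 F0')
    (phi : cell (F \o1 rmS S) (rmS T \o1 F0)) (phi' : cell (F' \o1 rmS S) (rmS T \o1 F0'))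
    (p : cell F F') (p0 : cell F0 F0') : Prop :=
  whL J p0 \v eqc e = eqc e' \v whR p I
  /\ phi' \v whR p (rmS S) = whL (rmS T) p0 \v phi.

(* maps of liftings (p, p0, ptilde); ptilde is given by its components
   (indexed by all K and all candidate modules N; J^*ptilde = (- o p0)J^*
   pins them down to M p0) *)
Record is_lifting_map (L L' : Lifting X0 X Y0 Y I J S T)
    (p : cell (lF L) (lF L')) (p0 : cell (lF0 L) (lF0 L'))
    (tp : forall (K : ob C) (N : RMod Y0 Y J (rmS T) K),
        cell (mdM N \o1 lF0 L) (mdM N \o1 lF0 L')) : Prop := {
  lm_Jp : whL J p0 \v eqc (lFI L) = eqc (lFI L') \v whR p I;
  lm_tpJ : forall (K : ob C) (N : RMod Y0 Y J (rmS T) K), tp K N = whL (mdM N) p0;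
  lm_tphom : forall (K : ob C) (N : RMod Y0 Y J (rmS T) K), is_module T N ->
      is_mod_hom (liftobj L N) (liftobj L' N) (tp K N);
  lm_tpnat : forall (K : ob C) (N N' : RMod Y0 Y J (rmS T) K) (g : cell (mdM N) (mdM N')),
      is_module T N -> is_module T N' -> is_mod_hom N N' g ->
      tp K N' \v whR g (lF0 L) = whR g (lF0 L') \v tp K N;
  lm_tpmod : forall (K K' : ob C) (H : hom K K') (N : RMod Y0 Y J (rmS T) K),
      is_module T N ->
      eqc (comp1A H (mdM N) (lF0 L')) \v tp K' (post H N)
      = whL H (tp K N) \v eqc (comp1A H (mdM N) (lF0 L));
  lm_phi : forall (K : ob C) (M : hom Y K),
      lphi L' M \v whR (whL M p) (rmS S) = tp K (Ustar T M) \v lphi L M }.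

End LiftingDefs.

Arguments is_rel_monad_trans {C X0 X Y0 Y I J S T F F' F0 F0'} e e' phi phi' p p0.

From Stdlib Require Import Eqdep FunctionalExtensionality.
From Corelib Require Import ssreflect.

(* The map (p, p0, ptilde) |-> (p, p0) lands in relative monad
   transformations because phi is the component of phitilde at 1_Y, so the
   modification axiom of ptilde at 1_Y is exactly the compatibility of
   (p, p0) with phi and phi'.  Conversely, given a transformation (p, p0),
   the components M p0 form a map of liftings; the only non-formal point is
   that N p0 is a morphism of S-modules Ftilde N -> Ftilde' N.  Condition (2)
   of a lifting expresses the operator of Ftilde N through that of
   Ftilde(T, dagger), which in turn equals  phi B . F f  (lemma
   [lift_Tmod_op_via_phi]); the transformation axioms then transport it along
   (p, p0).  Uniqueness holds since ptilde is forced to be M p0.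

   Since 1-cell laws hold only up to propositional equality, 2-cells with
   different but provably equal boundaries are compared by packing them with
   their boundary (heterogeneous equality, written a ≅ b). *)

Section TwoCategory.
Context {C : PreTwoCat} (HC : is_two_cat C).

Definition pack {A B : ob C} {f g : hom A B} (a : cell f g)
  : {fg : hom A B * hom A B & cell (fst fg) (snd fg)} :=
  existT (fun fg => cell (fst fg) (snd fg)) (f, g) a.

Local Notation "a ≅ b" := (pack a = pack b) (at level 70).

Lemma heq_eq {A B : ob C} {f g : hom A B} (a b : cell f g) : a ≅ b -> a = b.
Proof. exact (inj_pair2 _ (fun fg => cell (fst fg) (snd fg)) (f, g) a b). Qed.

Lemma heq_boundary {A B : ob C} {f g f' g' : hom A B} (a : cell f g) (a' : cell f' g') :
  a ≅ a' -> f = f' /\ g = g'.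
Proof. move=> H; apply (f_equal (@projT1 _ _)) in H; injection H; auto. Qed.

Ltac heq_subst H :=
  let E1 := fresh in let E2 := fresh in
  destruct (heq_boundary _ _ H) as [E1 E2]; subst; apply heq_eq in H; subst.

Lemma heq_vcomp {A B : ob C} {f g h f' g' h' : hom A B} (a : cell f g) (b : cell g h)
    (a' : cell f' g') (b' : cell g' h') : a ≅ a' -> b ≅ b' -> b \v a ≅ b' \v a'.
Proof. move=> H1 H2; heq_subst H1; heq_subst H2; reflexivity. Qed.

Lemma heq_whL {A B D : ob C} (h : hom B D) {f g f' g' : hom A B}
    (a : cell f g) (a' : cell f' g') : a ≅ a' -> whL h a ≅ whL h a'.
Proof. move=> H; heq_subst H; reflexivity. Qed.

Lemma heq_whR {A B D : ob C} {f g f' g' : hom B D} (a : cell f g) (a' : cell f' g')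
    (k : hom A B) : a ≅ a' -> whR a k ≅ whR a' k.
Proof. move=> H; heq_subst H; reflexivity. Qed.

Lemma heq_of_transport {A B : ob C} {f g f' g' : hom A B} (e1 : f = f') (e2 : g = g')
    (x : cell f g) (y : cell f' g') : eqc e2 \v x = y \v eqc e1 -> x ≅ y.
Proof. destruct e1, e2; simpl; rewrite (vidl _ HC) (vidr _ HC); by move->. Qed.

Lemma heq_eqcl {A B : ob C} {f g g' : hom A B} (e : g = g') (x : cell f g) :
  eqc e \v x ≅ x.
Proof. destruct e; simpl; by rewrite (vidl _ HC). Qed.

Lemma heq_eqcr {A B : ob C} {f f' g : hom A B} (e : f' = f) (x : cell f g) :
  x \v eqc e ≅ x.
Proof. destruct e; simpl; by rewrite (vidr _ HC). Qed.

Lemma heq_id2 {A B : ob C} {f g : hom A B} (e : f = g) : id2 f ≅ id2 g.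
Proof. by destruct e. Qed.

Lemma whL_eqc {A B D : ob C} (h : hom B D) {f g : hom A B} (e : f = g) :
  whL h (eqc e) = eqc (f_equal (fun x => h \o1 x) e).
Proof. destruct e; exact: (whL_id _ HC). Qed.

Lemma whR_eqc {A B D : ob C} {f g : hom B D} (e : f = g) (k : hom A B) :
  whR (eqc e) k = eqc (f_equal (fun x => x \o1 k) e).
Proof. destruct e; exact: (whR_id _ HC). Qed.

Lemma heq_whL_id1 {A B : ob C} {f g : hom A B} (a : cell f g) : whL (id1 B) a ≅ a.
Proof. exact: (heq_of_transport _ _ _ _ (whL_id1 _ HC _ _ _ _ a)). Qed.

Lemma heq_whL_comp {A B D E : ob C} (h : hom D E) (h' : hom B D) {f g : hom A B}
    (a : cell f g) : whL (h \o1 h') a ≅ whL h (whL h' a).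
Proof. exact: (heq_of_transport _ _ _ _ (whL_comp _ HC _ _ _ _ h h' _ _ a)). Qed.

Lemma heq_whR_comp {A B D E : ob C} {f g : hom D E} (a : cell f g) (k : hom B D)
    (k' : hom A B) : whR (whR a k) k' ≅ whR a (k \o1 k').
Proof. exact: (heq_of_transport _ _ _ _ (whR_comp _ HC _ _ _ _ _ _ a k k')). Qed.

Lemma heq_whLR {A B D E : ob C} (h : hom D E) {f g : hom B D} (a : cell f g)
    (k : hom A B) : whR (whL h a) k ≅ whL h (whR a k).
Proof. exact: (heq_of_transport _ _ _ _ (whLR _ HC _ _ _ _ h _ _ a k)). Qed.

Ltac heq_clean :=
  repeat first [ rewrite whL_eqc | rewrite whR_eqc | rewrite heq_eqcl | rewrite heq_eqcr ].

Section Modules.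
Context {Y0 Y : ob C} {J : hom Y0 Y} {T : RelMonad Y0 Y J} (HT : is_rel_monad T).

Lemma Tmod_is_module : is_module T (Tmod T).
Proof. destruct HT; constructor; simpl; auto. Qed.

(* U^*_Y M = (M T, M (-)^dagger) is a T-module: each axiom is M applied
   to the corresponding relative monad axiom. *)
Lemma Ustar_is_module (K : ob C) (M : hom Y K) : is_module T (Ustar T M).
Proof.
  constructor; simpl; intros; apply heq_eq.
  - rewrite (rm_natO _ _ _ _ HT); heq_clean.
    rewrite !(whL_v _ HC); heq_clean; rewrite !(whR_v _ HC); heq_clean.
    symmetry; exact: heq_whLR.
  - rewrite (rm_natA _ _ _ _ HT) (whL_v _ HC) !(vA _ HC); heq_clean.
    apply heq_vcomp => //; heq_clean; symmetry; exact: heq_whL_comp.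
  - rewrite (rm_natB _ _ _ _ HT) (whL_v _ HC) !(vA _ HC); heq_clean.
    apply heq_vcomp; heq_clean => //; symmetry; exact: heq_whL_comp.
  - rewrite (rm_unitr _ _ _ _ HT) (whL_id _ HC); heq_clean.
    exact: heq_id2 (eq_sym (comp1A _ _ _)).
  - rewrite (rm_assoc _ _ _ _ HT) (whL_v _ HC) !(vA _ HC); heq_clean.
    by apply heq_vcomp; heq_clean.
Qed.

Lemma Ustar_id_Tmod_hom :
  is_mod_hom (Ustar T (id1 Y)) (Tmod T) (eqc (comp1_idl (rmS T))).
Proof.
  move=> O A B h /=; apply heq_eq; rewrite !whR_eqc; heq_clean; exact: heq_whL_id1.
Qed.

End Modules.

Section Liftings.
Context {X0 X Y0 Y : ob C} {I : hom X0 X} {J : hom Y0 Y}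
  {S : RelMonad X0 X I} {T : RelMonad Y0 Y J}
  (HS : is_rel_monad S) (HT : is_rel_monad T).

Lemma lphi0_heq (L : Lifting X0 X Y0 Y I J S T) : lphi0 L ≅ lphi L (id1 Y).
Proof. rewrite /lphi0; by heq_clean. Qed.

(* By the modification axiom, phitilde at M is M phi. *)
Lemma lphi_whisker (L : Lifting X0 X Y0 Y I J S T) (HL : is_lifting L)
    (K : ob C) (M : hom Y K) : lphi L M ≅ whL M (lphi L (id1 Y)).
Proof.
  have transportM M' (e : M' = M) : lphi L M' ≅ lphi L M by subst.
  rewrite -(transportM _ (comp1_idr M)).
  exact: (heq_of_transport _ _ _ _ (lf_phimod _ HL _ _ M (id1 Y))).
Qed.

Lemma lift_Tmod_Ustar_op (L : Lifting X0 X Y0 Y I J S T) (HL : is_lifting L)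
    (O : ob C) (A B : hom O X0) (f : cell (I \o1 A) (rmS S \o1 B)) :
  lFt L (Tmod T) f ≅ lFt L (Ustar T (id1 Y)) f.
Proof.
  have := lf_hom L HL Y _ _ _ (Ustar_is_module HT _ (id1 Y)) (Tmod_is_module HT)
            Ustar_id_Tmod_hom O A B f.
  rewrite /= !whR_eqc => Hhom; symmetry; exact: (heq_of_transport _ _ _ _ Hhom).
Qed.

Lemma whL_ext_unit {Z : ob C} (G : hom X Z) (O : ob C) (A B : hom O X0)
    (f : cell (I \o1 A) (rmS S \o1 B)) :
  whL G (rmext S f) \v (eqc (comp1A G (rmS S) A) \v whR (whL G (rmunit S)) A) ≅ whL G f.
Proof.
  transitivity (pack (whL G (rmext S f) \v whL G (whR (rmunit S) A))).
  - apply heq_vcomp => //; rewrite heq_eqcl; exact: heq_whLR.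
  - by rewrite -(whL_v _ HC) (rm_unitl _ _ _ _ HS).
Qed.

(* Key formula: the operator of Ftilde(T, dagger), precomposed with t F0,
   is  phi B . F f.  With condition (2) this expresses every Ftilde N by phi. *)
Lemma lift_Tmod_op_via_phi (L : Lifting X0 X Y0 Y I J S T) (HL : is_lifting L)
    (O : ob C) (A B : hom O X0) (f : cell (I \o1 A) (rmS S \o1 B)) :
  lFt L (Tmod T) f \v whR (whR (rmunit T) (lF0 L)) A
  ≅ whR (lphi0 L) B \v eqc (eq_sym (comp1A (lF L) (rmS S) B)) \v whL (lF L) f.
Proof.
  (* phitilde_1 is a module morphism and satisfies condition (1) *)
  have phi_unit : lFt L (Ustar T (id1 Y)) f \v whR (whR (whL (id1 Y) (rmunit T)) (lF0 L)) A
      \v whR (eqc (eq_MFI L (id1 Y))) A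
    = whR (lphi L (id1 Y)) B \v mdop (Ustar S (id1 Y \o1 lF L)) f
      \v whR (whL (id1 Y \o1 lF L) (rmunit S)) A.
  { rewrite (vA _ HC) -(whR_v _ HC) -(lf_unit L HL) (whR_v _ HC) -(vA _ HC) /=.
    by rewrite -(lf_phihom L HL Y (id1 Y) O A B f). }
  transitivity (pack (lFt L (Ustar T (id1 Y)) f
                      \v whR (whR (whL (id1 Y) (rmunit T)) (lF0 L)) A)).
  { apply heq_vcomp; last exact: lift_Tmod_Ustar_op.
    apply heq_whR, heq_whR; symmetry; exact: heq_whL_id1. }
  rewrite -(heq_eqcr (f_equal (fun x => x \o1 A) (eq_MFI L (id1 Y)))).
  rewrite -whR_eqc phi_unit !(vA _ HC).
  apply heq_vcomp.
  { heq_clean.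
    by rewrite whL_ext_unit heq_whL_comp heq_whL_id1. }
  apply heq_whR; symmetry; exact: lphi0_heq.
Qed.

Section Transformations.
Variables (L L' : Lifting X0 X Y0 Y I J S T).
Hypotheses (HL : is_lifting L) (HL' : is_lifting L').

Lemma rel_monad_trans_phi_id (p : cell (lF L) (lF L')) (p0 : cell (lF0 L) (lF0 L')) :
  lphi0 L' \v whR p (rmS S) = whL (rmS T) p0 \v lphi0 L
  <-> lphi L' (id1 Y) \v whR (whL (id1 Y) p) (rmS S)
      = whL (id1 Y \o1 rmS T) p0 \v lphi L (id1 Y).
Proof.
  have lhs : lphi0 L' \v whR p (rmS S) ≅ lphi L' (id1 Y) \v whR (whL (id1 Y) p) (rmS S).
  { apply heq_vcomp; last exact: lphi0_heq.
    apply heq_whR; symmetry; exact: heq_whL_id1. }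
  have rhs : whL (rmS T) p0 \v lphi0 L ≅ whL (id1 Y \o1 rmS T) p0 \v lphi L (id1 Y).
  { apply heq_vcomp; first exact: lphi0_heq.
    by rewrite heq_whL_comp heq_whL_id1. }
  split => E; apply heq_eq; [rewrite -lhs -rhs | rewrite lhs rhs]; by rewrite E.
Qed.

Section GivenTransformation.
Variables (p : cell (lF L) (lF L')) (p0 : cell (lF0 L) (lF0 L')).
Hypothesis Hp_unit : whL J p0 \v eqc (lFI L) = eqc (lFI L') \v whR p I.
Hypothesis Hp_phi : lphi0 L' \v whR p (rmS S) = whL (rmS T) p0 \v lphi0 L.

Lemma lift_Tmod_op_trans (O : ob C) (A B : hom O X0) (h : cell (I \o1 A) (rmS S \o1 B)) :
  whR (whL (rmS T) p0) B \v (lFt L (Tmod T) h \v whR (whR (rmunit T) (lF0 L)) A)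
  ≅ (lFt L' (Tmod T) h \v whR (whR (rmunit T) (lF0 L')) A) \v whR (whL J p0) A.
Proof.
  have Hp_I : whR p (I \o1 A) ≅ whR (whL J p0) A.
  { rewrite -heq_whR_comp; apply heq_whR.
    exact: (heq_of_transport _ _ _ _ (eq_sym Hp_unit)). }
  transitivity (pack (whR (whL (rmS T) p0) B \v (whR (lphi0 L) B
                  \v eqc (eq_sym (comp1A (lF L) (rmS S) B)) \v whL (lF L) h))).
  { apply heq_vcomp => //; exact: lift_Tmod_op_via_phi. }
  transitivity (pack ((whR (lphi0 L') B \v eqc (eq_sym (comp1A (lF L') (rmS S) B))
                  \v whL (lF L') h) \v whR p (I \o1 A))).
  2:{ apply heq_vcomp => //; symmetry; exact: lift_Tmod_op_via_phi. }
  rewrite -!(vA _ HC) -(whR_v _ HC) -Hp_phi (whR_v _ HC) !(vA _ HC).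
  apply heq_vcomp => //; rewrite heq_eqcl -(vA _ HC).
  transitivity (pack (whR p (rmS S \o1 B) \v whL (lF L) h)).
  - apply heq_vcomp => //; rewrite heq_eqcr; exact: heq_whR_comp.
  - by rewrite (interchange _ HC).
Qed.

(* For every T-module N, the cell N p0 is a morphism of S-modules
   Ftilde N -> Ftilde' N: by condition (2) both operators are N applied
   to the operators of Ftilde(T, dagger), Ftilde'(T, dagger). *)
Lemma lift_trans_mod_hom (K : ob C) (N : RMod Y0 Y J (rmS T) K) (HN : is_module T N) :
  is_mod_hom (liftobj L N) (liftobj L' N) (whL (mdM N) p0).
Proof.
  move=> O A B h /=; apply heq_eq.
  set opT := fun L0 : Lifting X0 X Y0 Y I J S T =>
    eqc (comp1A (rmS T) (lF0 L0) B)
    \v (lFt L0 (Tmod T) h \v whR (whR (rmunit T) (lF0 L0)) A)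
    \v eqc (eq_sym (comp1A J (lF0 L0) A)).
  transitivity (pack (whL (mdM N) (whR p0 B) \v mdop N (opT L))).
  { apply heq_vcomp; last exact: heq_whLR.
    exact: (heq_of_transport _ _ _ _ (lf_ext L HL K N HN O A B h)). }
  transitivity (pack (mdop N (opT L') \v whL (mdM N) (whR p0 A))).
  2:{ apply heq_vcomp; first (symmetry; exact: heq_whLR).
      symmetry; exact: (heq_of_transport _ _ _ _ (lf_ext L' HL' K N HN O A B h)). }
  rewrite -(md_natB _ _ _ _ _ _ HN) -(md_natA _ _ _ _ _ _ HN).
  congr (pack (mdop N _)); apply heq_eq; rewrite /opT.
  transitivity (pack (whR (whL (rmS T) p0) B
                  \v (lFt L (Tmod T) h \v whR (whR (rmunit T) (lF0 L)) A))).
  { apply heq_vcomp; first by heq_clean. symmetry; exact: heq_whLR. }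
  rewrite lift_Tmod_op_trans; apply heq_vcomp; last by heq_clean.
  exact: heq_whLR.
Qed.

(* (p, p0, M p0) satisfies the modification axiom at every M, being M
   applied to its instance at 1_Y. *)
Lemma lift_trans_phi (K : ob C) (M : hom Y K) :
  lphi L' M \v whR (whL M p) (rmS S) = whL (M \o1 rmS T) p0 \v lphi L M.
Proof.
  have Hp_id := proj1 (rel_monad_trans_phi_id p p0) Hp_phi.
  apply heq_eq.
  transitivity (pack (whL M (lphi L' (id1 Y)) \v whL M (whR (whL (id1 Y) p) (rmS S)))).
  { apply heq_vcomp; last exact: lphi_whisker.
    rewrite -heq_whLR; apply heq_whR, heq_whL; symmetry; exact: heq_whL_id1. }
  rewrite -(whL_v _ HC) Hp_id (whL_v _ HC).
  apply heq_vcomp; first (symmetry; exact: lphi_whisker).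
  by rewrite heq_whL_comp; apply heq_whL; rewrite heq_whL_comp heq_whL_id1.
Qed.

End GivenTransformation.

Lemma lifting_map_rel_monad_trans p p0 tp :
  is_lifting_map L L' p p0 tp ->
  is_rel_monad_trans (lFI L) (lFI L') (lphi0 L) (lphi0 L') p p0.
Proof.
  move=> [Hp_unit Htp _ _ _ Htp_phi]; split => //.
  apply (rel_monad_trans_phi_id p p0); by rewrite Htp_phi Htp.
Qed.

Lemma rel_monad_trans_lifting_map p p0 :
  is_rel_monad_trans (lFI L) (lFI L') (lphi0 L) (lphi0 L') p p0 ->
  is_lifting_map L L' p p0 (fun K N => whL (mdM N) p0).
Proof.
  move=> [Hp_unit Hp_phi]; constructor => //.
  - move=> K N HN; exact: (lift_trans_mod_hom p p0 Hp_unit Hp_phi).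
  - move=> K N N' g _ _ _; symmetry; exact: (interchange _ HC).
  - move=> K K' H N _ /=; exact: (whL_comp _ HC).
  - move=> K M /=; exact: (lift_trans_phi p p0 Hp_phi).
Qed.

Lemma lifting_map_components p p0 tp :
  is_lifting_map L L' p p0 tp -> tp = (fun K N => whL (mdM N) p0).
Proof.
  move=> Hmap; apply functional_extensionality_dep => K.
  apply functional_extensionality_dep => N; exact: (lm_tpJ _ _ _ _ _ Hmap).
Qed.

End Transformations.
End Liftings.
End TwoCategory.

Theorem mainTheorem16 (C : PreTwoCat) (HC : is_two_cat C)
    (X0 X Y0 Y : ob C) (I : hom X0 X) (J : hom Y0 Y)
    (S : RelMonad X0 X I) (T : RelMonad Y0 Y J)
    (HS : is_rel_monad S) (HT : is_rel_monad T)
    (L L' : Lifting X0 X Y0 Y I J S T)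
    (HL : is_lifting L) (HL' : is_lifting L') :
  (forall p p0 tp, is_lifting_map L L' p p0 tp ->
     is_rel_monad_trans (lFI L) (lFI L') (lphi0 L) (lphi0 L') p p0)
  /\ (forall p p0, is_rel_monad_trans (lFI L) (lFI L') (lphi0 L) (lphi0 L') p p0 ->
        is_lifting_map L L' p p0 (fun K N => whL (mdM N) p0))
  /\ (forall p p0 tp, is_lifting_map L L' p p0 tp ->
        tp = (fun K N => whL (mdM N) p0)).
Proof.
  split; [| split].
  - exact: (lifting_map_rel_monad_trans HC L L').
  - exact (rel_monad_trans_lifting_map HC HS HT L L' HL HL').
  - exact: (lifting_map_components L L').
Qed.
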